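(* The zero-error feedback capacity of a finite-state erasure channel with maximal ratio $\tau$ is $C_{0f}=1-\tau$.
   Context: Logarithms are to base $q=|\mathcal{X}|\ge2$, $\mathcal{X}$ the finite input alphabet. Finite-state erasure channel: a strongly connected directed graph $\mathscr{G}=(\mathcal{S},\mathcal{E})$ with finite vertex set $\mathcal{S}$ (channel states) and $\mathcal{E}\subseteq\mathcal{S}\times\mathcal{S}$, each edge labelled $\ell(e)\in\{0,1\}$, distinct edges leaving the same state having distinct labels. A noise word $v(0:n)$ is admissible from initial state $s_0$ if it is the label sequence of a walk starting at $s_0$; output $y(t)=x(t)$ if $v(t)=0$ and $y(t)=*$ (a symbol not in $\mathcal{X}$) if $v(t)=1$. The initial state is arbitrary and unknown. The maximal ratio is $\tau=\max_i e_i/l_i$ over directed simple cycles ($e_i$ = number of edges labelled 1, $l_i$ = length). Zero-error feedback code of block length $n+1$: a finite message set $\mathcal{M}$ and encoding functions $f_t:\mathcal{M}\times(\mathcal{X}\cup\{*\})^t\to\mathcal{X}$, $t=0,\dots,n$, with channel input $x(t)=f_t(m,y(0:t-1))$; it is zero-error if no output word $y(0:n)$ can arise (for any initial state and any admissible noise) from two distinct messages. $C_{0f}=\sup_{n\in\mathbb{N}_0}\sup \log|\mathcal{M}|/(n+1)$ over all zero-error feedback codes of block length $n+1$. *)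

From Stdlib Require Import Reals.
From mathcomp Require Import all_boot.

Set Implicit Arguments.
Unset Strict Implicit.
Unset Printing Implicit Defensive.

(* A finite-state erasure channel is given by a finite state type S, an edge
   relation E : rel S and an edge labelling lab : S -> S -> bool
   (lab s t is the label of the edge (s,t); only used on edges; true = 1 = erasure). *)

Definition deterministic_labels (S : finType) (E : rel S) (lab : S -> S -> bool) :=
  forall s t1 t2, E s t1 -> E s t2 -> lab s t1 = lab s t2 -> t1 = t2.

Definition strongly_connected (S : finType) (E : rel S) :=
  forall s t, connect E s t.

Fixpoint admissible (S : finType) (E : rel S) (lab : S -> S -> bool)
    (s : S) (v : seq bool) : Prop :=
  match v with
  | [::] => True
  | b :: v' => exists t, E s t /\ lab s t = b /\ admissible E lab t v'
  end.

Definition simple_cycle (S : finType) (E : rel S) (c : seq S) : Prop :=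
  [/\ c != [::], uniq c & cycle E c].

Definition cycle_ones (S : finType) (lab : S -> S -> bool) (c : seq S) : nat :=
  count (fun p => lab p.1 p.2) (zip c (rot 1 c)).

Definition cycle_ratio (S : finType) (lab : S -> S -> bool) (c : seq S) : R :=
  Rdiv (INR (cycle_ones lab c)) (INR (size c)).

Definition is_max_ratio (S : finType) (E : rel S) (lab : S -> S -> bool) (tau : R) : Prop :=
  (exists c, simple_cycle E c /\ cycle_ratio lab c = tau) /\
  (forall c, simple_cycle E c -> Rle (cycle_ratio lab c) tau).

(* Channel run with feedback: erasure symbol * is None.  The family of encoding
   functions f_t (t = 0..n) is represented by one function f on output prefixes;
   f_t is its restriction to prefixes of length t. *)
Fixpoint run (X M : Type) (f : M -> seq (option X) -> X) (m : M)
    (past : seq (option X)) (v : seq bool) : seq (option X) :=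
  match v with
  | [::] => past
  | b :: v' => run f m (rcons past (if b then None else Some (f m past))) v'
  end.

Definition output (X M : Type) (f : M -> seq (option X) -> X) (m : M) (v : seq bool) :=
  run f m [::] v.

Definition zero_error_feedback_code (X S : finType) (E : rel S) (lab : S -> S -> bool)
    (n k : nat) (f : 'I_k -> seq (option X) -> X) : Prop :=
  forall (m1 m2 : 'I_k) (s1 s2 : S) (v1 v2 : seq bool),
    size v1 = n.+1 -> size v2 = n.+1 ->
    admissible E lab s1 v1 -> admissible E lab s2 v2 ->
    output f m1 v1 = output f m2 v2 -> m1 = m2.

Definition feedback_rates (X S : finType) (E : rel S) (lab : S -> S -> bool) (r : R) : Prop :=
  exists (n k : nat) (f : 'I_k -> seq (option X) -> X),
    (0 < k)%N /\ zero_error_feedback_code E lab n f /\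
    r = Rdiv (Rdiv (ln (INR k)) (ln (INR #|X|))) (INR n.+1).

Definition is_zero_error_feedback_capacity (X S : finType) (E : rel S)
    (lab : S -> S -> bool) (C : R) : Prop :=
  is_lub (feedback_rates X E lab) C.

(* Upper bound: walking around a simple cycle of maximal ratio tau yields, for every
   block length N, an admissible noise word with about (1 - tau) N non-erased positions.
   Since the erasure pattern is then known, the output of a zero-error code is determined
   by those symbols, so |M| <= q^((1 - tau) N).
   Lower bound: cutting simple cycles out of an arbitrary walk (each of ratio at most tau)
   until no state repeats shows that every admissible noise word of length N has at least
   (1 - tau) N - |S| - 1 non-erased positions.  With feedback the sender transmits a
   codeword of that length symbol by symbol, repeating whatever was erased, which gives
   rates (1 - tau) - O(1/N). *)

From Stdlib Require Import Reals Lra.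
From mathcomp Require Import all_boot zify.
Set Implicit Arguments.
Unset Strict Implicit.

Lemma nth_rot1 (T : Type) (x0 : T) (c : seq T) i : i < size c ->
  nth x0 (rot 1 c) i = nth x0 c (i.+1 %% size c).
Proof.
case: c => [|x c'] //= Hi; rewrite rot1_cons nth_rcons.
case: ltnP => H; first by rewrite modn_small.
have -> : i = size c' by lia.
by rewrite eqxx modnn.
Qed.

Lemma sum_periodic (g : nat -> nat) l : (forall i, g (i + l) = g i) ->
  forall j, \sum_(0 <= r < l) g (r + j) = \sum_(0 <= r < l) g r.
Proof.
move=> Hg; elim=> [|j IH]; first by apply: eq_bigr => r _; rewrite addn0.
rewrite -IH; case: l Hg {IH} => [|l] Hg; first by rewrite !big_geq.
rewrite [LHS]big_nat_recr // [RHS]big_nat_recl //= [RHS]addnC.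
congr (_ + _); first by apply: eq_bigr => r _; rewrite addnS addSn.
by rewrite add0n -(Hg j) addnS -addSn addnC.
Qed.

Lemma exists_le_card_mul (l : nat) (a : nat -> nat) : 0 < l ->
  exists2 r, r < l & \sum_(0 <= i < l) a i <= l * a r.
Proof.
move=> Hl; have [r Hr] : {r : 'I_l | \max_(i < l) a i = a r}.
  by apply: eq_bigmax; rewrite card_ord.
exists r => //; rewrite big_mkord -Hr.
rewrite -[X in X * _](card_ord l) -sum_nat_const.
by apply: leq_sum => i _; apply: (leq_bigmax (F := fun i : 'I_l => a i)).
Qed.

Lemma count_id_negb (v : seq bool) : count id v + count negb v = size v.
Proof. exact: count_predC. Qed.

Lemma uniq_mkseq (T : eqType) (f : nat -> T) n :
  (forall k, k < n -> f k \notin mkseq f k) -> uniq (mkseq f n).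
Proof.
elim: n => [|n IH] Hfresh //; rewrite mkseqS rcons_uniq Hfresh // IH // => k Hk.
by apply: Hfresh; apply: ltnW.
Qed.

Section Walks.
Variables (S : finType) (E : rel S) (lab : S -> S -> bool).

Lemma cycle_nthP (x0 : S) (c : seq S) :
  cycle E c <-> (forall i, i < size c -> E (nth x0 c i) (nth x0 c (i.+1 %% size c))).
Proof.
case: c => [|x c'] //=.
have Erot i : i < (size c').+1 ->
  nth x0 (rcons c' x) i = nth x0 (x :: c') (i.+1 %% (size c').+1).
  by move=> Hi; rewrite -rot1_cons nth_rot1.
have Ercons i : i < (size c').+1 -> nth x0 (x :: rcons c' x) i = nth x0 (x :: c') i.
  by move=> Hi; rewrite -rcons_cons nth_rcons /= Hi.
rewrite -cats1; split => [/(pathP x0) H i Hi | H].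
  by have := H i; rewrite size_cat addn1 cats1 Erot // Ercons // => ->.
apply/(pathP x0) => i; rewrite size_cat addn1 => Hi.
by rewrite cats1 Erot // Ercons //; apply: H.
Qed.

Lemma cycle_ones_sum (x0 : S) (c : seq S) :
  cycle_ones lab c = \sum_(i < size c) lab (nth x0 c i) (nth x0 c (i.+1 %% size c)).
Proof.
have Hs : size (zip c (rot 1 c)) = size c by rewrite size_zip size_rot minnn.
rewrite /cycle_ones -sum1_count big_mkcond (big_nth (x0, x0)) Hs big_mkord.
by apply: eq_bigr => i _; rewrite nth_zip ?size_rot // nth_rot1 //; case: lab.
Qed.

Definition walk (st : nat -> S) (N : nat) := forall j, j < N -> E (st j) (st j.+1).

Definition walk_labels (st : nat -> S) (N : nat) :=
  [seq lab (st j) (st j.+1) | j <- iota 0 N].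

Definition walk_ones (st : nat -> S) (m n : nat) := \sum_(m <= j < n) lab (st j) (st j.+1).

Lemma walk_labelsS st N :
  walk_labels st N.+1 = lab (st 0) (st 1) :: walk_labels (fun j => st j.+1) N.
Proof. by rewrite /walk_labels /= -(addn0 1) iotaDl -map_comp. Qed.

Lemma size_walk_labels st N : size (walk_labels st N) = N.
Proof. by rewrite size_map size_iota. Qed.

Lemma count_walk_labels st N : count id (walk_labels st N) = walk_ones st 0 N.
Proof.
rewrite count_map -sumn_count sumnE big_map /walk_ones /index_iota subn0.
exact: eq_bigr.
Qed.

Lemma walk_ones_le st m n : walk_ones st m n <= n - m.
Proof.
rewrite -[n - m]muln1 -sum_nat_const_nat.
by apply: leq_sum => j _; case: lab.
Qed.

Lemma admissible_walk s v : admissible E lab s v ->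
  exists st, [/\ st 0 = s, walk st (size v) & v = walk_labels st (size v)].
Proof.
elim: v s => [|b v IH] s /=; first by exists (fun _ => s).
case=> t [Est [<- /IH [st [Hst0 Hw Hv]]]].
exists (fun j => if j is j'.+1 then st j' else s); split=> //.
  by move=> [|j] Hj /=; [rewrite Hst0 | exact: Hw].
by rewrite walk_labelsS /= Hst0 -Hv.
Qed.

Lemma walk_admissible st N : walk st N -> admissible E lab (st 0) (walk_labels st N).
Proof.
elim: N st => [|N IH] st Hw //; rewrite walk_labelsS.
exists (st 1); split; first exact: Hw.
by split => //; apply: IH => j Hj; apply: Hw.
Qed.

Lemma walk_short_or_repeat (st : nat -> S) N : N < #|S| \/
  exists i d, [/\ 0 < d, i + d <= N, st (i + d) = st i & uniq [seq st t | t <- iota i d]].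
Proof.
case: (boolP [exists j : 'I_N.+1, st j \in mkseq st j]) => [/existsP Hrep | Hnorep].
  right; have Hex : exists j, (j <= N) && (st j \in mkseq st j).
    by case: Hrep => j Hj; exists j; rewrite -ltnS ltn_ord.
  case: (ex_minnP Hex) => j /andP [HjN /mapP [i]].
  rewrite mem_iota add0n => /andP [_ Hij] Hji Hmin.
  have Huniq : uniq (mkseq st j).
    apply: uniq_mkseq => k Hk; apply/negP => Hrk.
    by have := Hmin k; rewrite Hrk (leq_trans (ltnW Hk) HjN); lia.
  exists i, (j - i); split; [lia | lia | by rewrite subnKC ?Hji //; lia |].
  move: Huniq; rewrite /mkseq -{1}(subnKC (ltnW Hij)) iotaD map_cat cat_uniq add0n.
  by case/and3P.
left; have Huniq : uniq (mkseq st N.+1).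
  by apply: uniq_mkseq => k Hk; move/existsPn: Hnorep => /(_ (Ordinal Hk)).
by rewrite -[N.+1](size_mkseq st) -(card_uniqP Huniq) max_card.
Qed.

Lemma walk_segment_cycle (st : nat -> S) i d :
  0 < d -> st (i + d) = st i -> walk st (i + d) -> uniq [seq st t | t <- iota i d] ->
  simple_cycle E [seq st t | t <- iota i d] /\
  cycle_ones lab [seq st t | t <- iota i d] = walk_ones st i (i + d).
Proof.
move=> Hd Hclose Hw Hu; set c := [seq st t | t <- iota i d].
have Hsc : size c = d by rewrite size_map size_iota.
have Hnth t : t < d -> nth (st 0) c t = st (i + t).
  by move=> Ht; rewrite (nth_map 0) ?nth_iota ?size_iota.
have Hnext t : t < d -> nth (st 0) c (t.+1 %% d) = st (i + t).+1.
  move=> Ht; case: (ltngtP t.+1 d) => Ht'; [by rewrite modn_small // Hnth // addnS | lia |].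
  by rewrite Ht' modnn Hnth // addn0 -addnS Ht' Hclose.
split.
  split=> //; first by rewrite -size_eq0 Hsc -lt0n.
  apply/(cycle_nthP (st 0)) => t; rewrite Hsc => Ht.
  by rewrite Hnext // Hnth //; apply: Hw; lia.
rewrite (cycle_ones_sum (st 0)) Hsc /walk_ones -{1}(add0n i) big_addn addKn big_mkord.
by apply: eq_bigr => t _; rewrite Hnext // Hnth // addnC.
Qed.

Lemma walk_ones_cat st m n p : m <= n <= p ->
  walk_ones st m p = walk_ones st m n + walk_ones st n p.
Proof. by case/andP=> Hmn Hnp; rewrite /walk_ones (big_cat_nat Hmn Hnp). Qed.

Lemma walk_splice (st : nat -> S) N i d :
  i + d <= N -> st (i + d) = st i -> walk st N ->
  let st' t := st (if t < i then t else t + d) in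
  walk st' (N - d) /\ walk_ones st 0 N = walk_ones st' 0 (N - d) + walk_ones st i (i + d).
Proof.
move=> HN Hclose Hw st'.
have Hsucc t : st' t.+1 = st (if t < i then t else t + d).+1.
  rewrite /st'; case: (ltngtP t.+1 i) => [//|_|Ht]; first by rewrite addSn.
  by rewrite Ht Hclose.
split=> [t Ht|].
  by rewrite Hsucc /st'; apply: Hw; case: (ltnP t i) => _; lia.
have Hpre : walk_ones st' 0 i = walk_ones st 0 i.
  by apply: eq_big_nat => t /andP [_ Ht]; rewrite Hsucc /st' Ht.
have Hpost : walk_ones st' i (N - d) = walk_ones st (i + d) N.
  rewrite /walk_ones big_addn; apply: eq_big_nat => t /andP [Ht _].
  by rewrite Hsucc /st' ltnNge Ht.
rewrite (walk_ones_cat st' (n := i)) 1?(walk_ones_cat st (m := 0) (n := i)); try lia.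
rewrite (walk_ones_cat st (m := i) (n := i + d)); last lia.
by rewrite Hpre Hpost addnAC addnA.
Qed.

(* Cut out simple cycles until no state repeats; fewer than #|S| edges remain. *)
Lemma walk_ones_bound (l e : nat) :
  (forall c, simple_cycle E c -> cycle_ones lab c * l <= e * size c) ->
  forall N st, walk st N -> l * walk_ones st 0 N <= e * N + l * #|S|.
Proof.
move=> Hcyc; elim/ltn_ind=> N IH st Hw.
case: (walk_short_or_repeat st N) => [HN | [i [d [Hd HiN Hclose Hu]]]].
  by have := walk_ones_le st 0 N; rewrite subn0; nia.
have Hwd : walk st (i + d) by move=> t Ht; apply: Hw; lia.
have [Hc Hones] := walk_segment_cycle Hd Hclose Hwd Hu.
have := Hcyc _ Hc; rewrite Hones size_map size_iota => Hcb.
have [Hw' ->] := walk_splice HiN Hclose Hw.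
have := IH (N - d) ltac:(lia) _ Hw'; nia.
Qed.

(* Some rotation of the periodic walk around [c] carries at least the average number
   of erasures. *)
Lemma cycle_window c : simple_cycle E c -> forall N,
  exists st, walk st N /\ N * cycle_ones lab c <= size c * walk_ones st 0 N.
Proof.
case=> Hne _ Hcyc N; case: c Hne Hcyc => [|x0 c'] // _ Hcyc.
set c := x0 :: c'; set l := size c.
pose g i := nat_of_bool (lab (nth x0 c (i %% l)) (nth x0 c (i.+1 %% l))).
pose st r j := nth x0 c ((r + j) %% l).
have Hg i : g (i + l) = g i by rewrite /g modnDr -addSn modnDr.
have Hones r : walk_ones (st r) 0 N = \sum_(0 <= j < N) g (r + j).
  by apply: eq_bigr => j _; rewrite /st /g addnS.
have Hper : \sum_(0 <= r < l) g r = cycle_ones lab c.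
  rewrite (cycle_ones_sum x0) -/l big_mkord.
  by apply: eq_bigr => [[r Hr]] _; rewrite /g /= (modn_small Hr).
have [r _ Hr] := exists_le_card_mul (fun r => walk_ones (st r) 0 N) (isT : 0 < l).
exists (st r); split.
  move=> j _; have := (cycle_nthP x0 c).1 Hcyc ((r + j) %% l) (ltn_mod _ _).
  by rewrite -/l -addn1 modnDml addn1 /st addnS.
apply: leq_trans Hr; rewrite -Hper -{1}[N]subn0 -sum_nat_const_nat.
under [X in _ <= X]eq_bigr do rewrite Hones.
rewrite [X in _ <= X]exchange_big_nat; apply: leq_sum => j _.
by rewrite sum_periodic.
Qed.

End Walks.

Section FeedbackRuns.
Variables (X M : Type).

Lemma run_erasures (f : M -> seq (option X) -> X) m past v :
  map (@isSome X) (run f m past v) = map (@isSome X) past ++ map negb v.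
Proof.
elim: v past => [|b v IH] past /=; first by rewrite cats0.
by rewrite IH map_rcons -cats1 -catA; case: b.
Qed.

Lemma size_pmap_output (f : M -> seq (option X) -> X) m v :
  size (pmap id (output f m v)) = count negb v.
Proof.
have := congr1 (count id) (run_erasures f m [::] v).
by rewrite size_pmap /output count_map => ->; rewrite count_map.
Qed.

Lemma eq_isSome_pmap (o1 o2 : seq (option X)) :
  map (@isSome X) o1 = map (@isSome X) o2 -> pmap id o1 = pmap id o2 -> o1 = o2.
Proof.
elim: o1 o2 => [|a o1 IH] [|b o2] //= [].
case: a => [a|]; case: b => [b|] //= _ Hs; last by move/(IH _ Hs) ->.
by case=> -> /(IH _ Hs) ->.
Qed.

(* Feedback tells the sender how many symbols got through, so it can always send the
   first symbol of the codeword [w m] the receiver has not seen yet. *)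
Definition next_unreceived (x0 : X) (w : M -> seq X) m (past : seq (option X)) :=
  nth x0 (w m) (size (pmap id past)).

Lemma pmap_run_next_unreceived x0 w m past v :
  pmap id (run (next_unreceived x0 w) m past v) =
  pmap id past ++ mkseq (fun t => nth x0 (w m) (size (pmap id past) + t)) (count negb v).
Proof.
elim: v past => [|b v IH] past /=; first by rewrite cats0.
rewrite IH -cats1 pmap_cat; case: b => /=; first by rewrite cats0.
rewrite size_cat addn1 -catA /mkseq /= addn0 -[in iota 1 _](addn0 1) iotaDl -map_comp.
by congr (_ ++ _ :: _); apply: eq_map => t /=; rewrite addSnnS.
Qed.

End FeedbackRuns.

Section Codes.
Variables (X S : finType) (E : rel S) (lab : S -> S -> bool).

Lemma zero_error_code_card n k (f : 'I_k -> seq (option X) -> X) s v :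
  zero_error_feedback_code E lab n f -> size v = n.+1 -> admissible E lab s v ->
  k <= #|X| ^ count negb v.
Proof.
move=> Hz Hv Ha.
(* With the erasure pattern [v] fixed, the non-erased symbols determine the output. *)
have Hsize m : size (pmap id (output f m v)) == count negb v by rewrite size_pmap_output.
have Hinj : injective (fun m => Tuple (Hsize m)).
  move=> m1 m2 /(congr1 val) /= Hp; apply: (Hz m1 m2 s s v v) => //.
  by apply: eq_isSome_pmap; rewrite // /output !run_erasures.
by have := leq_card _ Hinj; rewrite card_ord card_tuple.
Qed.

Lemma zero_error_code_of_unerased n L (x0 : X) :
  (forall s v, size v = n.+1 -> admissible E lab s v -> L <= count negb v) ->
  exists f : 'I_(#|X| ^ L) -> seq (option X) -> X, zero_error_feedback_code E lab n f.
Proof.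
move=> HL; pose w (m : 'I_(#|X| ^ L)) : L.-tuple X :=
  enum_val (cast_ord (esym (card_tuple L X)) m).
exists (next_unreceived x0 w) => m1 m2 s1 s2 v1 v2 H1 H2 A1 A2 Ho.
have Hdecode m v :
    L <= count negb v -> take L (pmap id (output (next_unreceived x0 w) m v)) = w m.
  move=> Hc; rewrite /output pmap_run_next_unreceived /mkseq -map_take take_iota.
  by rewrite (minn_idPl Hc) -{2}(mkseq_nth x0 (w m)) size_tuple.
have := Hdecode m1 v1 (HL _ _ H1 A1); rewrite Ho Hdecode; last exact: HL A2.
by move/val_inj/enum_val_inj/cast_ord_inj.
Qed.

End Codes.

Section RealRatios.
Local Open Scope R_scope.

Lemma INR_expn m n : INR (m ^ n)%N = INR m ^ n.
Proof. by elim: n => [|n IH] //; rewrite expnS mult_INR IH. Qed.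

Lemma INR_gt0 n : (0 < n)%N -> 0 < INR n.
Proof. by move/ltP; apply: lt_0_INR. Qed.

Lemma ln_nat_gt0 q : (2 <= q)%N -> 0 < ln (INR q).
Proof.
move/ltP/(lt_INR 1) => Hq; change (1 < INR q) in Hq.
by rewrite -ln_1; apply: ln_increasing; lra.
Qed.

Lemma ln_le x y : 0 < x -> x <= y -> ln x <= ln y.
Proof. by move=> Hx [Hxy | ->]; [left; apply: ln_increasing | right]. Qed.

Lemma log_le_of_le_expn q k z : (2 <= q)%N -> (0 < k)%N -> (k <= q ^ z)%N ->
  ln (INR k) / ln (INR q) <= INR z.
Proof.
move=> Hq Hk Hkq; have Hlnq := ln_nat_gt0 Hq.
apply: (Rmult_le_reg_r _ _ _ Hlnq); rewrite /Rdiv Rmult_assoc Rinv_l ?Rmult_1_r; last lra.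
rewrite -ln_pow; last by apply: INR_gt0; apply: leq_trans Hq.
by apply: ln_le; [exact: INR_gt0 | rewrite -INR_expn; apply/le_INR/leP].
Qed.

Lemma log_expn q L : (2 <= q)%N -> ln (INR (q ^ L)%N) / ln (INR q) = INR L.
Proof.
move=> Hq; have Hlnq := ln_nat_gt0 Hq.
rewrite INR_expn ln_pow; last by apply: INR_gt0; apply: leq_trans Hq.
by field; lra.
Qed.

Lemma ratio_le_nat (a b c d : nat) : (0 < b)%N -> (0 < d)%N ->
  INR a / INR b <= INR c / INR d -> (a * d <= c * b)%N.
Proof.
move=> /INR_gt0 Hb /INR_gt0 Hd; set x := INR a / INR b; set y := INR c / INR d => H.
apply/leP/INR_le; rewrite !mult_INR.
have -> : INR a = x * INR b by rewrite /x; field; lra.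
have -> : INR c = y * INR d by rewrite /y; field; lra.
have := Rmult_lt_0_compat _ _ Hb Hd; nra.
Qed.

Lemma ratio_le_one_sub (z N e l : nat) : (0 < N)%N -> (0 < l)%N ->
  (z * l + N * e <= N * l)%N -> INR z / INR N <= 1 - INR e / INR l.
Proof.
move=> /INR_gt0 HN /INR_gt0 Hl /leP/le_INR; rewrite !plus_INR !mult_INR.
set x := INR z / INR N; set y := INR e / INR l.
have -> : INR z = x * INR N by rewrite /x; field; lra.
have -> : INR e = y * INR l by rewrite /y; field; lra.
have := Rmult_lt_0_compat _ _ HN Hl; nra.
Qed.

Lemma lt_ratio_of_nat (L A N e l : nat) b : (0 < N)%N -> (0 < l)%N ->
  (l * N < (L + A) * l + e * N)%N -> INR A / INR N < 1 - INR e / INR l - b ->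
  b < INR L / INR N.
Proof.
move=> /INR_gt0 HN /INR_gt0 Hl /ltP/lt_INR; rewrite !plus_INR !mult_INR !plus_INR.
set x := INR L / INR N; set a := INR A / INR N; set y := INR e / INR l.
have -> : INR L = x * INR N by rewrite /x; field; lra.
have -> : INR A = a * INR N by rewrite /a; field; lra.
have -> : INR e = y * INR l by rewrite /y; field; lra.
have := Rmult_lt_0_compat _ _ HN Hl; nra.
Qed.
Lemma exists_ratio_lt (A : nat) eps : 0 < eps -> exists n, INR A / INR n.+1 < eps.
Proof.
move=> Heps; have HA : 0 < INR A + 1 by have := pos_INR A; lra.
have [[|n] [Hn /ltP Hn0]] := archimed_cor1 _ (Rdiv_lt_0_compat _ _ Heps HA) => //.
exists n; have HN : 0 < / INR n.+1 by apply/Rinv_0_lt_compat/INR_gt0.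
apply: (Rle_lt_trans _ ((INR A + 1) * / INR n.+1)); first by rewrite /Rdiv; nra.
apply: (Rlt_le_trans _ ((INR A + 1) * (eps / (INR A + 1)))); first exact: Rmult_lt_compat_l.
by right; field; lra.
Qed.
End RealRatios.

Section Capacity.
Variables (X S : finType) (E : rel S) (lab : S -> S -> bool).
Local Open Scope R_scope.

Lemma size_simple_cycle_gt0 c : simple_cycle E c -> (0 < size c)%N.
Proof. by case; case: c. Qed.

Lemma feedback_rate_le c : (2 <= #|X|)%N -> simple_cycle E c ->
  forall r, feedback_rates X E lab r -> r <= 1 - cycle_ratio lab c.
Proof.
move=> Hq Hc r [n [k [f [Hk [Hz ->]]]]].
have [st [Hw Hdense]] := cycle_window lab Hc n.+1.
have Hv := size_walk_labels lab st n.+1.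
have Hk' := zero_error_code_card Hz Hv (walk_admissible lab Hw).
have := count_id_negb (walk_labels lab st n.+1).
rewrite count_walk_labels Hv => Hcount.
apply: (Rle_trans _ (INR (count negb (walk_labels lab st n.+1)) / INR n.+1)).
  apply: Rmult_le_compat_r; last exact: log_le_of_le_expn Hk'.
  by left; apply/Rinv_0_lt_compat/INR_gt0.
apply: ratio_le_one_sub => //; first exact: size_simple_cycle_gt0.
nia.
Qed.

Lemma unerased_lower_bound (l e : nat) s v :
  (forall c, simple_cycle E c -> cycle_ones lab c * l <= e * size c)%N ->
  admissible E lab s v -> (l * size v <= l * count negb v + e * size v + l * #|S|)%N.
Proof.
move=> Hcyc /admissible_walk [st [_ Hw Hv]].
have := walk_ones_bound Hcyc Hw; rewrite -count_walk_labels -Hv.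
have := count_id_negb v; nia.
Qed.

Lemma one_sub_ratio_le c0 : (2 <= #|X|)%N -> simple_cycle E c0 ->
  (forall c, simple_cycle E c -> cycle_ratio lab c <= cycle_ratio lab c0) ->
  forall b, is_upper_bound (feedback_rates X E lab) b -> 1 - cycle_ratio lab c0 <= b.
Proof.
move=> Hq Hc0 Hmax b Hub; set l := size c0; set e := cycle_ones lab c0.
have Hl : (0 < l)%N := size_simple_cycle_gt0 Hc0.
have Hcyc c : simple_cycle E c -> (cycle_ones lab c * l <= e * size c)%N.
  by move=> Hc; apply: ratio_le_nat (Hmax c Hc) => //; apply: size_simple_cycle_gt0.
apply: Rnot_lt_le => Hb.
have [n Hn] := exists_ratio_lt #|S|.+1 (Rlt_Rminus _ _ Hb).
pose L := ((l - e) * n.+1 %/ l - #|S|)%N.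
have HL s v : size v = n.+1 -> admissible E lab s v -> (L <= count negb v)%N.
  move=> Hv /(unerased_lower_bound Hcyc); rewrite Hv => Hbound.
  have := leq_divM ((l - e) * n.+1) l; rewrite /L; nia.
have [x0 _] : exists x : X, x \in X by apply/card_gt0P; apply: leq_trans Hq.
have [f Hf] := zero_error_code_of_unerased x0 HL.
have Hrate : feedback_rates X E lab (INR L / INR n.+1).
  exists n, (#|X| ^ L)%N, f; split; first by rewrite expn_gt0 (leq_trans _ Hq).
  by rewrite log_expn.
have : b < INR L / INR n.+1.
  apply: (lt_ratio_of_nat (A := #|S|.+1)) Hn => //.
  have := ltn_ceil ((l - e) * n.+1) Hl; rewrite /L; nia.
by move/Rlt_not_le; apply; apply: Hub.
Qed.

End Capacity.

Theorem theorem3 (X S : finType) (E : rel S) (lab : S -> S -> bool) (tau : R) :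
  (2 <= #|X|)%N ->
  strongly_connected E ->
  (exists s t, E s t) ->
  deterministic_labels E lab ->
  is_max_ratio E lab tau ->
  is_zero_error_feedback_capacity X E lab (Rminus 1 tau).
Proof.
move=> Hq _ _ _ [[c0 [Hc0 <-]] Hmax]; split.
  by move=> r; apply: feedback_rate_le.
exact: one_sub_ratio_le.
Qed.
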